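(* Let $\mathscr{H}$ be the class of all (finite, simple) graphs $G$ on at least twelve vertices with $\gamma(G)=2$. Then $\mathscr{H}$ is recognizable: if $G\in\mathscr{H}$ and $H$ is any graph with $\mathscr{D}(H)=\mathscr{D}(G)$, then $H\in\mathscr{H}$.
   Context: All graphs are finite, simple and undirected. $\gamma(G)$ is the domination number of $G$ (the minimum size of a set $S\subseteq V(G)$ such that every vertex outside $S$ has a neighbour in $S$). For a vertex $v$, the card $G-v$ is the unlabeled graph obtained by deleting $v$ and its incident edges; the deck $\mathscr{D}(G)$ is the multiset of all cards of $G$ (up to isomorphism). A graph $H$ with $\mathscr{D}(H)=\mathscr{D}(G)$ is a reconstruction of $G$. A class $\mathcal{F}$ of graphs is recognizable if every reconstruction of every graph in $\mathcal{F}$ also lies in $\mathcal{F}$. *)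

From mathcomp Require Import all_boot.
Set Implicit Arguments. Unset Strict Implicit. Unset Printing Implicit Defensive.

Definition simple_graph (T : finType) (e : rel T) : Prop :=
  symmetric e /\ irreflexive e.

Definition dominating (T : finType) (e : rel T) (D : {set T}) : bool :=
  [forall x, (x \notin D) ==> [exists y in D, e x y]].

(* Domination number: minimum size of a dominating set (the full vertex set
   is always dominating, so #|T| is a valid initial bound). *)
Definition domination_number (T : finType) (e : rel T) : nat :=
  \big[minn/#|T|]_(D : {set T} | dominating e D) #|D|.

Definition iso_induced (T1 T2 : finType) (e1 : rel T1) (e2 : rel T2)
  (A : {set T1}) (B : {set T2}) : Prop :=
  exists f : T1 -> T2,
    [/\ {in A &, injective f}, f @: A = B &
        {in A &, forall x y, e2 (f x) (f y) = e1 x y}].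

(* Equal decks
   (equality of the multisets of isomorphism classes of cards) means:
   there is a bijection sigma : V(G) -> V(H) with G - v ~= H - sigma v. *)
Definition same_deck (T1 T2 : finType) (e1 : rel T1) (e2 : rel T2) : Prop :=
  exists sigma : T1 -> T2, bijective sigma /\
    forall v : T1, iso_induced e1 e2 (~: [set v]) (~: [set sigma v]).

(* Kelly-style counting.  Let c_j(A, k) count the j-subsets D of a vertex set A
   leaving exactly k vertices of A \ D undominated.  A j-set D of G with k
   undominated vertices is counted in c_j(V - w, k) for the n - j - k vertices w
   outside D and its undominated set, and a j-set with k + 1 undominated vertices
   for the k + 1 choices of w among them:
     sum_w c_j(V - w, k) = (n - j - k) c_j(V, k) + (k + 1) c_j(V, k + 1).
   The left-hand side is read off the deck, so for two graphs with the same deck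
   the differences d_k satisfy (n-j-k) d_k + (k+1) d_(k+1) = 0 for k = 0, 1, 2,
   whence 6 d_3 = -(n-j)(n-j-1)(n-j-2) d_0.  As |d_3| <= C(n, j), this forces
   d_0 = 0 once 6 C(n, j) < (n-j)(n-j-1)(n-j-2), which holds for j <= 2 and
   n >= 12.  So the numbers c_j(V, 0) of dominating j-sets, j <= 2, are
   reconstructible, and they decide whether the domination number is 2. *)

From mathcomp Require Import all_boot zify.
Set Implicit Arguments. Unset Strict Implicit. Unset Printing Implicit Defensive.

Definition undominated (T : finType) (e : rel T) (A D : {set T}) : {set T} :=
  [set x in A | (x \notin D) && ~~ [exists y in D, e x y]].

Definition undom_count (T : finType) (e : rel T) (A : {set T}) (j k : nat) : nat :=
  #|[set D : {set T} | [&& D \subset A, #|D| == j & #|undominated e A D| == k]]|.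

Definition ndominating (T : finType) (e : rel T) (j : nat) : nat :=
  #|[set D : {set T} | dominating e D & #|D| == j]|.

Lemma card_set_sum (T : finType) (P : pred T) : #|[set x | P x]| = \sum_x P x.
Proof. by rewrite -sum1dep_card big_mkcond. Qed.

Lemma sum_mem_card (T : finType) (A : {set T}) : \sum_x (x \in A) = #|A|.
Proof. by rewrite -card_set_sum cardsE. Qed.

Lemma geq_bigmin_cond (I : finType) (P : pred I) (F : I -> nat) x i0 :
  P i0 -> \big[minn/x]_(i | P i) F i <= F i0.
Proof.
move=> Pi0; have : i0 \in index_enum I := mem_index_enum i0.
elim: (index_enum I) => [//|a r IHr].
rewrite inE big_cons => /orP[/eqP <-|i0r]; first by rewrite Pi0 geq_minl.
by case: (P a); [apply: leq_trans (geq_minr _ _) (IHr i0r) | apply: IHr].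
Qed.

Lemma recurrence_head_eq (M B : nat) (x y : nat -> nat) :
  (forall k, k < 3 ->
     (M - k) * x k + k.+1 * x k.+1 = (M - k) * y k + k.+1 * y k.+1) ->
  x 3 <= B -> y 3 <= B -> 6 * B < M * (M - 1) * (M - 2) -> x 0 = y 0.
Proof.
move=> rec x3B y3B ltBP.
have e0 := rec 0 isT; have e1 := rec 1 isT; have e2 := rec 2 isT.
(* Scale the three equations by (M-1)(M-2), M-2 and 2: their middle terms telescope. *)
have elim3 : M * (M - 1) * (M - 2) * x 0 + 6 * x 3 =
             M * (M - 1) * (M - 2) * y 0 + 6 * y 3 by nia.
nia.
Qed.

Lemma six_bin_lt_falling n j : 12 <= n -> j <= 2 ->
  6 * 'C(n, j) < (n - j) * (n - j - 1) * (n - j - 2).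
Proof.
move=> n12; case: j => [|[|[|//]]] _.
- by rewrite bin0; nia.
- by rewrite bin1; nia.
- have : 2 * 'C(n, 2) = n * (n - 1) by rewrite -mul_bin_diag bin1 subn1.
  nia.
Qed.

Lemma sum_card_setD1 (T : finType) (U D : {set T}) k : [disjoint U & D] ->
  \sum_w ((w \notin D) && (#|U :\ w| == k)) =
  (#|T| - #|D| - k) * (#|U| == k) + k.+1 * (#|U| == k.+1).
Proof.
move=> disUD.
have term w : (w \notin D) && (#|U :\ w| == k) =
    (w \in U) * (#|U| == k.+1) + (w \in ~: (U :|: D)) * (#|U| == k) :> nat.
  have := cardsD1 w U; rewrite in_setC in_setU.
  case wU: (w \in U) => /= ->.
  - by rewrite (disjointFr disUD wU) add1n eqSS addn0 mul1n.
  - by rewrite mul0n !add0n; case: (w \in D); rewrite /= ?mul0n ?mul1n.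
rewrite (eq_bigr _ (fun w _ => term w)) big_split -!big_distrl /= !sum_mem_card.
have := cardsC (U :|: D); rewrite cardsU (disjoint_setI0 disUD) cards0 subn0.
by case: eqP => [->|_]; case: eqP => [->|_] /=; lia.
Qed.

Section Domination.
Variables (T : finType) (e : rel T).

Lemma dominating_setT : dominating e setT.
Proof. by apply/forallP => x; rewrite inE. Qed.

Lemma domination_number_min D : dominating e D -> domination_number e <= #|D|.
Proof. exact: geq_bigmin_cond. Qed.

Lemma domination_number_attained :
  exists2 D, dominating e D & #|D| = domination_number e.
Proof.
suff /existsP[D /andP[hD /eqP]] :
    [exists D, dominating e D && (#|D| == domination_number e)] by exists D.
apply: (big_ind (fun m => [exists D, dominating e D && (#|D| == m)])).
- by apply/existsP; exists setT; rewrite dominating_setT cardsT eqxx.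
- by move=> m1 m2 h1 h2; rewrite /minn; case: ifP.
- by move=> D hD; apply/existsP; exists D; rewrite hD eqxx.
Qed.

Lemma domination_numberP j :
  domination_number e = j <->
  (forall i, i < j -> ndominating e i = 0) /\ 0 < ndominating e j.
Proof.
have ndom_gt0 D : dominating e D -> 0 < ndominating e #|D|.
  by move=> hD; apply/card_gt0P; exists D; rewrite inE hD eqxx.
have [D0 hD0 hD0n] := domination_number_attained.
split=> [<- | [small /card_gt0P[D]]].
- split; last by rewrite -hD0n; exact: ndom_gt0.
  move=> i lt_i; apply/eqP; rewrite cards_eq0; apply/eqP/setP => D.
  rewrite !inE; apply/negbTE/andP => -[hD /eqP hDi].
  by have := domination_number_min hD; rewrite hDi leqNgt lt_i.
- rewrite inE => /andP[hD /eqP hDj].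
  apply/eqP; rewrite eqn_leq -{1}hDj domination_number_min //= leqNgt.
  apply/negP => lt_dn; have := ndom_gt0 _ hD0.
  by rewrite hD0n small.
Qed.

End Domination.

Section Undominated.
Variables (T : finType) (e : rel T).

Lemma dominatingE D : dominating e D = (undominated e setT D == set0).
Proof.
apply/forallP/eqP => [dom | /setP undom0 x].
- apply/setP => x; rewrite !inE; have := dom x.
  by case: (x \in D); case: [exists _ in _, _].
- have := undom0 x; rewrite !inE.
  by case: (x \in D); case: [exists _ in _, _].
Qed.

Lemma undom_count_dominating j : undom_count e setT j 0 = ndominating e j.
Proof.
by apply: eq_card => D; rewrite !inE subsetT cards_eq0 dominatingE /= andbC.
Qed.

Lemma undom_count_le_bin A j k : undom_count e A j k <= 'C(#|T|, j).
Proof.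
rewrite -card_draws; apply: subset_leq_card; apply/subsetP => D.
by rewrite !inE => /and3P[_ -> _].
Qed.

Lemma undominated_setC1 w D :
  undominated e (~: [set w]) D = undominated e setT D :\ w.
Proof. by apply/setP => x; rewrite !inE andbA. Qed.

Lemma disjoint_undominated A D : [disjoint undominated e A D & D].
Proof.
rewrite -setI_eq0; apply/eqP/setP => x.
by rewrite !inE; case: (x \in D); rewrite ?andbF.
Qed.

Lemma sum_undom_count_cards j k :
  \sum_w undom_count e (~: [set w]) j k =
  (#|T| - j - k) * undom_count e setT j k + k.+1 * undom_count e setT j k.+1.
Proof.
rewrite /undom_count; under eq_bigr do rewrite card_set_sum.
rewrite exchange_big !card_set_sum big_distrr [X in _ + X]big_distrr -big_split /=.
apply: eq_bigr => D _; rewrite subsetT /=.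
under eq_bigr do rewrite subsetC sub1set inE undominated_setC1.
case: (#|D| =P j) => [<- | _] /=; last by rewrite !muln0 big1 // => w _; rewrite andbF.
exact/sum_card_setD1/disjoint_undominated.
Qed.

End Undominated.

Section InducedIsomorphism.
Variables (T1 T2 : finType) (e1 : rel T1) (e2 : rel T2).
Variables (A : {set T1}) (B : {set T2}) (f : T1 -> T2).
Hypotheses (f_inj : {in A &, injective f}) (fA : f @: A = B)
  (f_edge : {in A &, forall x y, e2 (f x) (f y) = e1 x y}).

Lemma mem_imset_sub (D : {set T1}) x :
  D \subset A -> x \in A -> (f x \in f @: D) = (x \in D).
Proof.
move=> sDA xA; apply/imsetP/idP => [[y yD fxy] | xD]; last by exists x.
by rewrite (f_inj xA (subsetP sDA _ yD) fxy).
Qed.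

Lemma exists_edge_imset (D : {set T1}) x : D \subset A -> x \in A ->
  [exists z in f @: D, e2 (f x) z] = [exists z in D, e1 x z].
Proof.
move=> sDA xA; apply/existsP/existsP.
- case=> _ /andP[/imsetP[z zD ->] xz].
  by exists z; rewrite zD -f_edge // (subsetP sDA).
- case=> z /andP[zD xz].
  by exists (f z); rewrite imset_f //= f_edge // (subsetP sDA).
Qed.

Lemma undominated_imset (D : {set T1}) : D \subset A ->
  undominated e2 B (f @: D) = f @: undominated e1 A D.
Proof.
move=> sDA; apply/setP => y; apply/idP/imsetP => [| [x + ->]].
- rewrite inE -fA => /andP[/imsetP[x xA ->]].
  rewrite mem_imset_sub // exists_edge_imset // => undom_x.
  by exists x; rewrite // inE xA.
- rewrite !inE -fA => /andP[xA].
  by rewrite imset_f //= mem_imset_sub // exists_edge_imset.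
Qed.

Lemma card_imset_sub (D : {set T1}) : D \subset A -> #|f @: D| = #|D|.
Proof.
move=> sDA; apply: card_in_imset => x y /(subsetP sDA) xA /(subsetP sDA).
exact: f_inj.
Qed.

Lemma imset_sub_inj :
  {in [pred D : {set T1} | D \subset A] &, injective (fun D : {set T1} => f @: D)}.
Proof.
move=> D1 D2 sD1A sD2A fD12; apply/setP => x.
have [xA | xNA] := boolP (x \in A).
  by rewrite -(mem_imset_sub sD1A xA) -(mem_imset_sub sD2A xA) fD12.
by rewrite (contraNF (subsetP sD1A x)) // (contraNF (subsetP sD2A x)).
Qed.

Lemma imset_sub_onto (D' : {set T2}) :
  D' \subset B -> exists2 D : {set T1}, D \subset A & f @: D = D'.
Proof.
move=> sD'B; exists (A :&: f @^-1: D'); first exact: subsetIl.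
apply/setP => y; apply/imsetP/idP => [[x /setIP[_ /[!inE] fx] ->] // | yD'].
move: (subsetP sD'B _ yD'); rewrite -fA => /imsetP[x xA fxy].
by exists x; rewrite // !inE xA -fxy.
Qed.

Lemma undom_count_iso j k : undom_count e1 A j k = undom_count e2 B j k.
Proof.
have cond_imset (D : {set T1}) : D \subset A ->
    [&& f @: D \subset B, #|f @: D| == j & #|undominated e2 B (f @: D)| == k] =
    [&& D \subset A, #|D| == j & #|undominated e1 A D| == k].
  move=> sDA; have sUA : undominated e1 A D \subset A.
    by apply/subsetP => x /setIdP[].
  by rewrite undominated_imset // !card_imset_sub // -fA imsetS // sDA.
rewrite /undom_count; set S1 := [set D : {set T1} | _].
have -> : [set D' : {set T2} |
            [&& D' \subset B, #|D'| == j & #|undominated e2 B D'| == k]] =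
          (fun D : {set T1} => f @: D) @: S1.
  apply/setP => D'; rewrite inE; apply/idP/imsetP => [hD' | [D + ->]].
  - have [sD'B _ _] := and3P hD'; have [D sDA fD] := imset_sub_onto sD'B.
    by exists D; rewrite // inE -cond_imset // fD.
  - by rewrite inE => hD; rewrite cond_imset //; case/and3P: hD.
apply/esym/card_in_imset => D1 D2; rewrite !inE => /and3P[sD1A _ _] /and3P[sD2A _ _].
exact: imset_sub_inj.
Qed.

End InducedIsomorphism.

Section SameDeck.
Variables (T1 T2 : finType) (e1 : rel T1) (e2 : rel T2).
Hypothesis deck : same_deck e1 e2.

Lemma same_deck_card : #|T1| = #|T2|.
Proof. by case: deck => sigma [/bij_eq_card]. Qed.

Lemma same_deck_sum_undom_count j k :
  \sum_v undom_count e1 (~: [set v]) j k = \sum_w undom_count e2 (~: [set w]) j k.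
Proof.
case: deck => sigma [bij_sigma iso].
rewrite [RHS](reindex sigma) /=; last exact: onW_bij.
apply: eq_bigr => v _; have [f [f_inj fA f_edge]] := iso v.
exact: undom_count_iso f_inj fA f_edge _ _.
Qed.

Lemma same_deck_ndominating j :
  6 * 'C(#|T1|, j) < (#|T1| - j) * (#|T1| - j - 1) * (#|T1| - j - 2) ->
  ndominating e1 j = ndominating e2 j.
Proof.
move=> ltCM; rewrite -!undom_count_dominating.
apply: (recurrence_head_eq (M := #|T1| - j) (B := 'C(#|T1|, j))) => //.
- move=> k _; rewrite {2}same_deck_card -!sum_undom_count_cards.
  exact: same_deck_sum_undom_count.
- exact: undom_count_le_bin.
- by rewrite same_deck_card; exact: undom_count_le_bin.
Qed.

End SameDeck.

Theorem theorem12 (T1 T2 : finType) (e1 : rel T1) (e2 : rel T2) :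
  simple_graph e1 -> simple_graph e2 ->
  12 <= #|T1| -> domination_number e1 = 2 ->
  same_deck e2 e1 ->
  12 <= #|T2| /\ domination_number e2 = 2.
Proof.
move=> _ _ n12 /domination_numberP[small pos] deck.
have n21 := same_deck_card deck.
have ndom_eq i : i <= 2 -> ndominating e2 i = ndominating e1 i.
  move=> le_i2; apply: (same_deck_ndominating deck).
  by rewrite n21; exact: six_bin_lt_falling.
split; first by rewrite n21.
apply/domination_numberP; split; last by rewrite ndom_eq.
by move=> i lt_i2; rewrite ndom_eq ?small // ltnW.
Qed.
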